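(* Let $G$ be a finite abelian group. There is a point $\nu\in\mathcal{P}(G)$ whose basin of attraction (the set of $\mu\in\mathcal{P}(G)$ whose $\omega$-limit set under $Q$ is $\{\nu\}$) is an open and dense subset of $\mathcal{P}(G)$.
   Context: $\mathcal{P}(G)$ is the simplex of probability measures on $G$ with convolution $(\nu*\mu)(\{g\})=\sum_{xy=g}\nu(\{x\})\mu(\{y\})$ and unit $1=\delta_e$. For $t\in[0,1)$, $Q_t(\mu)=(1-t)\mu*(1-t\mu)^{-1}=\sum_{k\ge0}(1-t)t^k\mu^{k+1}$. The $\omega$-limit set of $\mu$ is $\{\nu:\nu=\lim_kQ_{t_k}(\mu)\text{ for some } t_k\to1^-\}$. Such a $\nu$ is called the main attractor point. *)

From HB Require Import structures.
From mathcomp Require Import all_boot all_order all_algebra all_fingroup.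
From mathcomp Require Import all_classical all_reals all_analysis.
Set Implicit Arguments. Unset Strict Implicit. Unset Printing Implicit Defensive.
Import Order.TTheory GRing.Theory Num.Theory numFieldNormedType.Exports.
Local Open Scope classical_set_scope.
Local Open Scope ring_scope.

Definition isProb (R : realType) (G : finGroupType) (mu : G -> R) : Prop :=
  (forall g, 0 <= mu g) /\ \sum_(g : G) mu g = 1.

Definition conv (R : realType) (G : finGroupType) (nu mu : G -> R) : G -> R :=
  fun g => \sum_(x : G) \sum_(y : G | (x * y)%g == g) nu x * mu y.

Definition delta_e (R : realType) (G : finGroupType) : G -> R :=
  fun g => if g == 1%g then 1 else 0.

Definition cpow (R : realType) (G : finGroupType) (mu : G -> R) (n : nat) : G -> R :=
  iter n (conv mu) (@delta_e R G).

Definition Qt (R : realType) (G : finGroupType) (t : R) (mu : G -> R) : G -> R :=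
  fun g => limn (series (fun k : nat => ((1 - t) * t ^+ k * cpow mu k.+1 g : R))) : R.

Definition omega_limit (R : realType) (G : finGroupType) (mu nu : G -> R) : Prop :=
  exists t : nat -> R,
    (forall k, 0 <= t k < 1) /\ t @ \oo --> (1 : R) /\
    (forall g, (fun k => Qt (t k) mu g) @ \oo --> nu g).

Definition basin (R : realType) (G : finGroupType) (nu mu : G -> R) : Prop :=
  isProb mu /\ (forall nu' : G -> R, omega_limit mu nu' <-> nu' = nu).

(* distance on P(G) (l^1; induces the standard topology of the simplex) *)
Definition pdist (R : realType) (G : finGroupType) (mu mu' : G -> R) : R :=
  \sum_(g : G) `|mu g - mu' g|.

Definition open_in_P (R : realType) (G : finGroupType) (B : (G -> R) -> Prop) : Prop :=
  (forall mu, B mu -> isProb mu) /\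
  forall mu, B mu -> exists2 e : R, 0 < e &
    forall mu', isProb mu' -> pdist mu mu' < e -> B mu'.

Definition dense_in_P (R : realType) (G : finGroupType) (B : (G -> R) -> Prop) : Prop :=
  forall mu, isProb mu -> forall e : R, 0 < e -> exists2 mu', B mu' & pdist mu mu' < e.

(* The attractor is the uniform measure [unif].  [Q_t mu] is the Abel mean of
   the powers of [mu], a probability measure with [Q_t = (1 - t) mu + t mu * Q_t],
   so [mu * Q_t - Q_t = O(1 - t)].  If the support of [mu] generates [G] as a
   semigroup, an average of powers of [mu] is a measure [rho >= c > 0] with
   [rho * Q_t - Q_t = O(1 - t)], and Doeblin's contraction turns this into
   [Q_t - unif = O(1 - t)].  If instead some [g] is charged by no power of [mu],
   then [Q_t mu g = 0] for all [t].  Hence the basin of [unif] consists of the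
   measures whose support generates [G]: it is open because small perturbations
   do not shrink supports, and dense because mixing in a little of [unif] makes
   the support full. *)
From Pilot Require Import Defs.
From mathcomp Require Import all_boot all_order all_algebra all_fingroup.
From mathcomp Require Import all_classical all_reals all_analysis.
From mathcomp Require Import ring lra.
(* Restores the [conv] of Defs, shadowed by the one of mathcomp-analysis. *)
Import Defs.
Import Order.TTheory GRing.Theory Num.Theory numFieldNormedType.Exports.
Set Implicit Arguments. Unset Strict Implicit. Unset Printing Implicit Defensive.
Local Open Scope ring_scope.

Section FiniteSums.
Local Open Scope classical_set_scope.

Lemma ler_sum_term (T : numDomainType) (I : finType) (F : I -> T) i :
  (forall j, 0 <= F j) -> F i <= \sum_j F j.
Proof. by move=> F0; rewrite (bigD1 i) //= lerDl sumr_ge0. Qed.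

Lemma cvg_sum (R : realType) (I : finType) (u : I -> nat -> R) (l : I -> R) :
  (forall i, u i @ \oo --> l i) -> (fun n => \sum_i u i n) @ \oo --> \sum_i l i.
Proof. by move=> ul; apply: cvg_big => //; exact: add_continuous. Qed.

End FiniteSums.

Section Convolution.
Variables (R : realType) (G : finGroupType).
Implicit Types (mu nu f : G -> R) (g x : G).

Lemma convE nu mu g : conv nu mu g = \sum_x nu x * mu (x^-1 * g)%g.
Proof.
apply: eq_bigr => x _; rewrite (big_pred1 (x^-1 * g)%g) // => y /=.
by apply/eqP/eqP => [<-|->]; rewrite ?mulKg ?mulKVg.
Qed.

Lemma sum_invgMr (F : G -> R) g : \sum_x F (x^-1 * g)%g = \sum_x F x.
Proof.
by rewrite [RHS](reindex_inj (h := fun x => x^-1 * g)%g) // => x y /mulIg /invg_inj.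
Qed.

Lemma sum_conv nu mu : \sum_g conv nu mu g = (\sum_g nu g) * \sum_g mu g.
Proof.
under eq_bigr do rewrite convE.
rewrite exchange_big mulr_suml; apply: eq_bigr => x _.
rewrite -mulr_sumr (reindex_inj (mulgI x)) /=.
by under eq_bigr do rewrite mulKg.
Qed.

Lemma conv_ge0 nu mu g : (forall x, 0 <= nu x) -> (forall x, 0 <= mu x) ->
  0 <= conv nu mu g.
Proof. by move=> nu0 mu0; rewrite convE sumr_ge0 // => x _; rewrite mulr_ge0. Qed.

Lemma conv_delta_er mu g : conv mu (@delta_e R G) g = mu g.
Proof.
rewrite convE (bigD1 g) //= /delta_e mulVg eqxx mulr1 big1 ?addr0 // => x xg.
by rewrite -eq_invg_mul invgK (negPf xg) mulr0.
Qed.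

Lemma conv_delta_el mu g : conv (@delta_e R G) mu g = mu g.
Proof.
rewrite convE (bigD1 1%g) //= /delta_e eqxx mul1r invg1 mul1g big1 ?addr0 //.
by move=> x /negPf ->; rewrite mul0r.
Qed.

Lemma convA nu mu f g : conv (conv nu mu) f g = conv nu (conv mu f) g.
Proof.
rewrite convE; under eq_bigr do rewrite convE mulr_suml.
rewrite exchange_big convE; apply: eq_bigr => x _.
rewrite convE mulr_sumr (reindex_inj (mulgI x)); apply: eq_bigr => y _.
by rewrite /= mulKg invMg mulgA mulrA.
Qed.

Lemma conv_gt0 nu mu g : (forall x, 0 <= nu x) -> (forall x, 0 <= mu x) ->
  0 < conv nu mu g <-> exists x, 0 < nu x /\ 0 < mu (x^-1 * g)%g.
Proof.
move=> nu0 mu0; have numu0 x : 0 <= nu x * mu (x^-1 * g)%g by rewrite mulr_ge0.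
rewrite convE; split=> [|[x [nux mux]]].
- move=> /gt_eqF/negbT/eqP/psumr_neq0P-/(_ (fun x _ => numu0 x))[x /= nuxmux].
  exists x; rewrite !lt0r nu0 mu0 !andbT.
  by split; apply: contraTneq nuxmux => ->; rewrite (mul0r, mulr0) ltxx.
- by apply: lt_le_trans (ler_sum_term x numu0); rewrite mulr_gt0.
Qed.

Lemma convBr mu f f' g :
  conv mu (fun x => f x - f' x) g = conv mu f g - conv mu f' g.
Proof. by rewrite !convE -sumrB; apply: eq_bigr => x _; rewrite mulrBr. Qed.

Lemma convZl (k : R) nu f g : conv (fun x => k * nu x) f g = k * conv nu f g.
Proof. by rewrite !convE mulr_sumr; apply: eq_bigr => x _; rewrite mulrA. Qed.

Lemma conv_suml (I : finType) (nu : I -> G -> R) f g :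
  conv (fun x => \sum_i nu i x) f g = \sum_i conv (nu i) f g.
Proof.
rewrite convE; under eq_bigr do rewrite mulr_suml.
by rewrite exchange_big; apply: eq_bigr => i _; rewrite convE.
Qed.

End Convolution.

Section Probability.
Variables (R : realType) (G : finGroupType).
Implicit Types (mu nu f : G -> R) (g x : G).

Lemma isProb_le1 mu g : isProb mu -> mu g <= 1.
Proof. by move=> [mu0 <-]; exact: ler_sum_term. Qed.

Lemma isProb_delta_e : isProb (@delta_e R G).
Proof.
split=> [g|]; first by rewrite /delta_e; case: ifP.
by rewrite (bigD1 1%g) //= /delta_e eqxx big1 ?addr0 // => g /negPf ->.
Qed.

Lemma isProb_conv nu mu : isProb nu -> isProb mu -> isProb (conv nu mu).
Proof.
move=> [nu0 nu1] [mu0 mu1]; split=> [g|]; first exact: conv_ge0.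
by rewrite sum_conv nu1 mu1 mulr1.
Qed.

Lemma isProb_cpow mu n : isProb mu -> isProb (cpow mu n).
Proof.
move=> mu_prob; elim: n => [|n IHn]; first exact: isProb_delta_e.
exact: isProb_conv.
Qed.

Lemma cpow1 mu g : cpow mu 1 g = mu g.
Proof. exact: conv_delta_er. Qed.

Lemma cpow_ge0 mu n g : isProb mu -> 0 <= cpow mu n g.
Proof. by move=> mu_prob; case: (isProb_cpow n mu_prob). Qed.

Lemma norm_conv_le mu f (b : R) g :
  isProb mu -> (forall x, `|f x| <= b) -> `|conv mu f g| <= b.
Proof.
move=> [mu0 mu1] fb; rewrite convE; apply: le_trans (ler_norm_sum _ _ _) _.
apply: (@le_trans _ _ (\sum_x mu x * b)); last by rewrite -mulr_suml mu1 mul1r.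
by apply: ler_sum => x _; rewrite normrM ger0_norm // ler_wpM2l.
Qed.

Lemma cpow_conv_defect mu f (d : R) :
  isProb mu -> (forall g, `|conv mu f g - f g| <= d) ->
  forall n g, `|conv (cpow mu n) f g - f g| <= n%:R * d.
Proof.
move=> mu_prob fd; elim=> [|n IHn] g.
  by rewrite conv_delta_el subrr normr0 mul0r.
have -> : conv (cpow mu n.+1) f g - f g =
    conv mu (fun x => conv (cpow mu n) f x - f x) g + (conv mu f g - f g).
  by rewrite convBr -convA addrA subrK.
by rewrite mulrSr mulrDl mul1r (le_trans (ler_normD _ _)) // lerD // norm_conv_le.
Qed.

Lemma isProb_dist_le1 mu nu g : isProb mu -> isProb nu -> `|mu g - nu g| <= 1.
Proof.
move=> mu_prob nu_prob.
have mu1 := isProb_le1 g mu_prob; have nu1 := isProb_le1 g nu_prob.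
have mu0 := proj1 mu_prob g; have nu0 := proj1 nu_prob g.
by rewrite ler_norml; apply/andP; split; lra.
Qed.

Lemma card_gt0_R : 0 < #|G|%:R :> R.
Proof. by rewrite ltr0n; apply/card_gt0P; exists 1%g. Qed.

Lemma sumr_const_card (c : R) : \sum_(x : G) c = c * #|G|%:R.
Proof. by rewrite sumr_const cardT -cardE mulr_natr. Qed.

Definition unif : G -> R := fun _ => #|G|%:R^-1.

Lemma unif_gt0 g : 0 < unif g.
Proof. by rewrite invr_gt0 card_gt0_R. Qed.

Lemma isProb_unif : isProb unif.
Proof.
split=> [g|]; first exact/ltW/unif_gt0.
by rewrite sumr_const_card mulVf // gt_eqF // card_gt0_R.
Qed.

Definition mix (s : R) mu nu : G -> R := fun g => (1 - s) * mu g + s * nu g.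

Lemma isProb_mix (s : R) mu nu :
  0 <= s <= 1 -> isProb mu -> isProb nu -> isProb (mix s mu nu).
Proof.
move=> /andP[s0 s1] [mu0 mu1] [nu0 nu1]; split=> [g|].
  by rewrite addr_ge0 ?mulr_ge0 ?subr_ge0.
by rewrite big_split /= -!mulr_sumr mu1 nu1 !mulr1 subrK.
Qed.

Lemma pdist_mix (s : R) mu nu : pdist mu (mix s mu nu) = `|s| * pdist mu nu.
Proof.
rewrite /pdist mulr_sumr; apply: eq_bigr => g _.
by rewrite -normrM; congr `|_|; rewrite /mix; ring.
Qed.

Lemma pdist_le2 mu nu : isProb mu -> isProb nu -> pdist mu nu <= 2.
Proof.
move=> [mu0 mu1] [nu0 nu1]; apply: (@le_trans _ _ (\sum_g (mu g + nu g))).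
  by apply: ler_sum => g _; rewrite (le_trans (ler_normB _ _)) // !ger0_norm.
by rewrite big_split /= mu1 nu1.
Qed.

End Probability.
Arguments unif {R G}.
Arguments card_gt0_R {R G}.

Section Doeblin.
Variables (R : realType) (G : finGroupType).
Implicit Types (rho f : G -> R) (g x : G).

Lemma conv_minorizedE rho f (c : R) g : \sum_x f x = 1 ->
  conv rho f g = c + \sum_x (rho x - c) * f (x^-1 * g)%g.
Proof.
move=> f1; rewrite convE -{1}[c]mulr1 -f1 -(sum_invgMr f g) mulr_sumr -big_split.
by apply: eq_bigr => x _ /=; rewrite -mulrDl addrC subrK.
Qed.

Lemma conv_minorized_le rho f (c M : R) g :
  \sum_x rho x = 1 -> (forall x, c <= rho x) -> \sum_x f x = 1 ->
  (forall x, f x <= M) -> conv rho f g <= c + (1 - c * #|G|%:R) * M.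
Proof.
move=> rho1 rhoc f1 fM; rewrite (@conv_minorizedE rho f c g f1) lerD2l.
rewrite -sumr_const_card -[1]rho1 -sumrB mulr_suml.
by apply: ler_sum => x _; rewrite ler_wpM2l ?subr_ge0.
Qed.

Lemma conv_minorized_ge rho f (c m : R) g :
  \sum_x rho x = 1 -> (forall x, c <= rho x) -> \sum_x f x = 1 ->
  (forall x, m <= f x) -> c + (1 - c * #|G|%:R) * m <= conv rho f g.
Proof.
move=> rho1 rhoc f1 fm; rewrite (@conv_minorizedE rho f c g f1) lerD2l.
rewrite -sumr_const_card -[1]rho1 -sumrB mulr_suml.
by apply: ler_sum => x _; rewrite ler_wpM2l ?subr_ge0.
Qed.

(* Doeblin: convolution by a measure [rho >= c] contracts the oscillation of
   [f] by the factor [1 - c #|G|], so an almost [rho]-invariant [f] is almost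
   uniform. *)
Lemma doeblin rho f (c eps : R) :
  \sum_x rho x = 1 -> 0 < c -> (forall x, c <= rho x) -> \sum_x f x = 1 ->
  (forall g, `|conv rho f g - f g| <= eps) ->
  forall g, `|f g - unif g| <= eps / (c * #|G|%:R).
Proof.
move=> rho1 c0 rhoc f1 feps g; rewrite /unif; set N : R := #|G|%:R.
have cN0 : 0 < c * N by rewrite mulr_gt0 ?card_gt0_R.
have [gM _ fM] := @arg_maxP _ _ G 1%g predT f isT.
have [gm _ fm] := @arg_minP _ _ G 1%g predT f isT.
have leM := conv_minorized_le gM rho1 rhoc f1 (fun x => fM x isT).
have gem := conv_minorized_ge gm rho1 rhoc f1 (fun x => fm x isT).
have := feps gM; have := feps gm; rewrite !ler_norml => /andP[? ?] /andP[? ?].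
have cNN : N^-1 * (c * N) = c by rewrite mulrC mulfK ?gt_eqF ?card_gt0_R.
have upM : (f gM - N^-1) * (c * N) <= eps by rewrite mulrBl cNN; lra.
have lom : - eps <= (f gm - N^-1) * (c * N) by rewrite mulrBl cNN; lra.
rewrite -mulNr ler_pdivrMr // ler_pdivlMr //; apply/andP; split.
- by rewrite (le_trans lom) // ler_pM2r // lerD2r fm.
- by rewrite (le_trans _ upM) // ler_pM2r // lerD2r; exact: fM.
Qed.

End Doeblin.

Section AbelMean.
Variables (R : realType) (G : finGroupType).
Local Open Scope classical_set_scope.
Implicit Types (mu : G -> R) (g x : G) (t : R).

Definition Qt_term t mu g (k : nat) : R := (1 - t) * t ^+ k * cpow mu k.+1 g.

Lemma Qt_term_ge0 t mu g k : isProb mu -> 0 <= t < 1 -> 0 <= Qt_term t mu g k.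
Proof.
move=> mu_prob /andP[t0 t1].
by rewrite !mulr_ge0 ?exprn_ge0 ?cpow_ge0 // subr_ge0 ltW.
Qed.

Lemma Qt_is_cvg t mu g : isProb mu -> 0 <= t < 1 -> cvgn (series (Qt_term t mu g)).
Proof.
move=> mu_prob t01; have /andP[t0 t1] := t01.
apply: (series_le_cvg (v_ := geometric (1 - t) t)) => [k|k|k|].
- exact: Qt_term_ge0.
- by rewrite /= mulr_ge0 ?exprn_ge0 // subr_ge0 ltW.
- apply: ler_piMr; first by rewrite mulr_ge0 ?exprn_ge0 // subr_ge0 ltW.
  exact/isProb_le1/isProb_cpow.
- by apply: is_cvg_geometric_series; rewrite ger0_norm.
Qed.

Lemma Qt_cvg t mu g : isProb mu -> 0 <= t < 1 ->
  series (Qt_term t mu g) @ \oo --> Qt t mu g.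
Proof. exact: Qt_is_cvg. Qed.

Lemma isProb_Qt t mu : isProb mu -> 0 <= t < 1 -> isProb (Qt t mu).
Proof.
move=> mu_prob t01; have /andP[t0 t1] := t01; split=> [g|].
  apply: limr_ge; first exact: Qt_is_cvg.
  apply: nearW => n.
  by rewrite sumr_ge0 // => k _; exact: Qt_term_ge0.
have partial : (fun n => \sum_g series (Qt_term t mu g) n) = series (geometric (1 - t) t).
  apply: funext => n; rewrite /series /= exchange_big /=; apply: eq_bigr => k _.
  by rewrite -mulr_sumr (proj2 (isProb_cpow _ mu_prob)) mulr1.
apply: (norm_cvg_unique (F := series (geometric (1 - t) t) @ \oo)) => /=.
  by rewrite -partial; apply: cvg_sum => g; exact: Qt_cvg.
rewrite -[X in _ --> X](@divff _ (1 - t)) ?subr_eq0 ?gt_eqF //.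
by apply: cvg_geometric_series; rewrite ger0_norm.
Qed.

Lemma Qt_fixpoint t mu g : isProb mu -> 0 <= t < 1 ->
  t * conv mu (Qt t mu) g = Qt t mu g - (1 - t) * mu g.
Proof.
move=> mu_prob t01.
pose b n := conv mu (fun h => series (Qt_term t mu h) n) g.
have b_cvg : b @ \oo --> conv mu (Qt t mu) g.
  rewrite /b; under eq_fun do rewrite convE.
  by rewrite convE; apply: cvg_sum => x; apply: cvgMl_tmp; exact: Qt_cvg.
have shift n : t * b n = series (Qt_term t mu g) n.+1 - (1 - t) * mu g.
  rewrite /b /series /= big_nat_recl // /Qt_term expr0 mulr1 cpow1.
  rewrite [RHS]addrC addKr convE big_distrr /=.
  under eq_bigr => x _ do rewrite !big_distrr /=.
  rewrite exchange_big; apply: eq_bigr => k _.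
  by rewrite [in RHS]convE big_distrr; apply: eq_bigr => x _ /=; rewrite exprS; ring.
apply: (norm_cvg_unique (F := (fun n => t * b n) @ \oo)) => /=; first exact: cvgMl_tmp.
under eq_fun do rewrite shift.
apply: cvgB; last exact: cvg_cst.
by rewrite (cvg_shiftS (series (Qt_term t mu g))); exact: Qt_cvg.
Qed.

End AbelMean.

Section Basin.
Variables (R : realType) (G : finGroupType).
Local Open Scope classical_set_scope.
Implicit Types (mu nu : G -> R) (g x : G) (t : R).

Definition generating mu := forall g, exists n, 0 < cpow mu n.+1 g.

Lemma Qt_defect t mu g : isProb mu -> 2^-1 <= t < 1 ->
  `|conv mu (Qt t mu) g - Qt t mu g| <= 2 * (1 - t).
Proof.
move=> mu_prob /andP[th t1]; have t0 : 0 <= t by apply: le_trans th; rewrite invr_ge0.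
have t01 : 0 <= t < 1 by rewrite t0.
have t1' : 0 < 1 - t by rewrite subr_gt0.
have shift : t * (conv mu (Qt t mu) g - Qt t mu g) = (1 - t) * (Qt t mu g - mu g).
  by rewrite mulrBr Qt_fixpoint //; ring.
have : t * `|conv mu (Qt t mu) g - Qt t mu g| <= 1 - t.
  rewrite -[t in t * _]ger0_norm // -normrM shift normrM gtr0_norm //.
  by rewrite -[X in _ <= X]mulr1 ler_pM2l // (isProb_dist_le1 _ (isProb_Qt mu_prob t01)).
have := normr_ge0 (conv mu (Qt t mu) g - Qt t mu g).
set d := `|_|; move=> d0 td; have : 2^-1 * d <= t * d by rewrite ler_wpM2r.
lra.
Qed.

(* [rho] averages over [g] a power [mu^(n_g + 1)] that charges [g]. *)
Lemma generating_average mu : isProb mu -> generating mu ->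
  exists rho : G -> R, exists c J : R,
  [/\ \sum_x rho x = 1, 0 < c, forall x, c <= rho x, 0 <= J &
      forall f (d : R), (forall g, `|conv mu f g - f g| <= d) ->
      forall g, `|conv rho f g - f g| <= J * d].
Proof.
move=> mu_prob /boolp.choice[n n_gt0].
have Ni0 : 0 < #|G|%:R^-1 :> R by rewrite invr_gt0 card_gt0_R.
pose rho x := #|G|%:R^-1 * \sum_g cpow mu (n g).+1 x.
have [x0 _ x0min] := @arg_minP _ _ G 1%g predT (fun x => cpow mu (n x).+1 x) isT.
exists rho, (#|G|%:R^-1 * cpow mu (n x0).+1 x0), (#|G|%:R^-1 * \sum_g (n g).+1%:R).
split.
- rewrite -mulr_sumr exchange_big.
  under eq_bigr do rewrite (proj2 (isProb_cpow _ mu_prob)).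
  by rewrite sumr_const_card mul1r mulVf ?gt_eqF ?card_gt0_R.
- by rewrite mulr_gt0.
- move=> x; rewrite ler_pM2l //; apply: le_trans (x0min x isT) _.
  exact: (ler_sum_term x (fun g => cpow_ge0 _ _ mu_prob)).
- by rewrite mulr_ge0 ?sumr_ge0 ?ltW.
move=> f d fd g.
have -> : conv rho f g - f g = #|G|%:R^-1 * \sum_h (conv (cpow mu (n h).+1) f g - f g).
  rewrite convZl conv_suml sumrB sumr_const_card.
  by rewrite mulrBr [_ * (f g * _)]mulrCA mulVf ?mulr1 // gt_eqF ?card_gt0_R.
rewrite normrM gtr0_norm // -mulrA ler_pM2l // mulr_suml.
apply: le_trans (ler_norm_sum _ _ _) _; apply: ler_sum => h _.
exact: cpow_conv_defect.
Qed.

Lemma Qt_rate mu : isProb mu -> generating mu ->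
  exists K : R, forall t, 0 <= t < 1 -> forall g, `|Qt t mu g - unif g| <= K * (1 - t).
Proof.
move=> mu_prob mu_gen.
have [rho [c [J [rho1 c0 rhoc J0 rho_defect]]]] := generating_average mu_prob mu_gen.
set K1 := J * 2 / (c * #|G|%:R).
have K10 : 0 <= K1 by rewrite !(mulr_ge0, invr_ge0, ltW c0, ltW card_gt0_R).
exists (K1 + 2) => t t01 g; have /andP[t0 t1] := t01.
have t1' : 0 <= 1 - t by rewrite subr_ge0 ltW.
have K1t : 0 <= K1 * (1 - t) by rewrite mulr_ge0.
rewrite mulrDl; case: (ltP t 2^-1) => [th|th].
- have := isProb_dist_le1 g (isProb_Qt mu_prob t01) (isProb_unif R G); lra.
have Qdefect h := Qt_defect h mu_prob (introT andP (conj th t1)).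
have := doeblin rho1 c0 rhoc (proj2 (isProb_Qt mu_prob t01)) (rho_defect _ _ Qdefect) g.
have -> : J * (2 * (1 - t)) / (c * #|G|%:R) = K1 * (1 - t).
  by rewrite /K1; field; rewrite ?gt_eqF ?card_gt0_R.
lra.
Qed.

Lemma Qt_cvg_unif mu (s : nat -> R) : isProb mu -> generating mu ->
  (forall k, 0 <= s k < 1) -> s @ \oo --> (1 : R) ->
  forall g, (fun k => Qt (s k) mu g) @ \oo --> unif g.
Proof.
move=> mu_prob mu_gen s01 s1 g; have [K QK] := Qt_rate mu_prob mu_gen.
have err0 : (fun k => K * (1 - s k)) @ \oo --> 0.
  by rewrite -(mulr0 K) -(subrr 1); apply: cvgMl_tmp; apply: cvgB => //; exact: cvg_cst.
apply: (@squeeze_cvgr _ _ _ _ (fun k => unif g - K * (1 - s k))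
                            (fun k => unif g + K * (1 - s k))).
- by apply: nearW => k; rewrite -ler_distl QK.
- by rewrite -[X in _ --> X]subr0; apply: cvgB => //; exact: cvg_cst.
- by rewrite -[X in _ --> X]addr0; apply: cvgD => //; exact: cvg_cst.
Qed.

Lemma Qt_eq0 t mu g : (forall n, cpow mu n.+1 g = 0) -> Qt t mu g = 0.
Proof.
move=> mu0; rewrite /Qt.
have -> : series (fun k => (1 - t) * t ^+ k * cpow mu k.+1 g) = fun=> 0.
  apply: funext => n; rewrite /series /= big1 // => k _.
  by have /= -> := mu0 k; rewrite mulr0.
exact: norm_lim_cst.
Qed.

Lemma basin_unifP mu : basin unif mu <-> isProb mu /\ generating mu.
Proof.
split=> [[mu_prob mu_basin] | [mu_prob mu_gen]].
  split=> // g; apply: contrapT => not_reached.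
  have Q0 t : Qt t mu g = 0.
    apply: Qt_eq0 => n; apply/eqP; rewrite eq_le cpow_ge0 // andbT leNgt.
    by apply/negP => reached; apply: not_reached; exists n.
  have [s [_ [_ Qs]]] := proj2 (mu_basin unif) erefl.
  have := Qs g; under eq_fun do rewrite Q0.
  by move=> /(norm_cvg_unique (cvg_cst 0)) /eqP; rewrite lt_eqF ?unif_gt0.
split=> // nu; split.
  move=> [s [s01 [s1 Qs]]]; apply: funext => g.
  exact: (norm_cvg_unique (Qs g) (Qt_cvg_unif (g := g) mu_prob mu_gen s01 s1)).
move=> ->; pose s k : R := 1 - harmonic k.
have s01 k : 0 <= s k < 1.
  by rewrite subr_ge0 ltrBlDr ltrDl harmonic_gt0 andbT invf_le1 ?ler1n ?ltr0n.
have s1 : s @ \oo --> (1 : R).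
  by rewrite -[X in _ --> X]subr0; apply: cvgB; [exact: cvg_cst | exact: cvg_harmonic].
by exists s; split=> //; split=> //; exact: Qt_cvg_unif.
Qed.

Lemma cpow_gt0_supp mu nu n g : isProb mu -> isProb nu ->
  (forall x, 0 < mu x -> 0 < nu x) -> 0 < cpow mu n g -> 0 < cpow nu n g.
Proof.
move=> mu_prob nu_prob supp; elim: n g => [//|n IHn] g.
move=> /(conv_gt0 _ (proj1 mu_prob) (fun x => cpow_ge0 n x mu_prob))[x [mux cx]].
apply/(conv_gt0 _ (proj1 nu_prob) (fun x => cpow_ge0 n x nu_prob)).
by exists x; split; [exact: supp | exact: IHn].
Qed.

Lemma generating_supp mu nu : isProb mu -> isProb nu ->
  (forall x, 0 < mu x -> 0 < nu x) -> generating mu -> generating nu.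
Proof.
move=> mu_prob nu_prob supp mu_gen g; have [n mun] := mu_gen g.
by exists n; exact: cpow_gt0_supp mun.
Qed.

Lemma open_basin_unif : open_in_P (basin (@unif R G)).
Proof.
split=> [mu [] //|mu /basin_unifP[mu_prob mu_gen]].
have [x0 /andP[_ mux0]] : exists x, true && (0 < mu x).
  apply: psumr_neq0P => [x _|]; first exact: (proj1 mu_prob).
  by rewrite (proj2 mu_prob); exact/eqP/oner_neq0.
have [m mum mumin] := @arg_minP _ _ G x0 [pred x | 0 < mu x] mu mux0.
exists (mu m) => // nu nu_prob dist.
apply/basin_unifP; split=> //; apply: generating_supp mu_gen => // x mux.
have := mumin x mux; have : `|mu x - nu x| <= pdist mu nu.
  exact: (ler_sum_term x (fun g => normr_ge0 (mu g - nu g))).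
rewrite ler_norml => /andP[_ ?] /= ?; lra.
Qed.

Lemma dense_basin_unif : dense_in_P (basin (@unif R G)).
Proof.
move=> mu mu_prob e e0; pose s := Num.min (e / 4) 1.
have s0 : 0 < s by rewrite lt_min ltr01 andbT divr_gt0.
have s1 : s <= 1 by rewrite ge_min lexx orbT.
have se : s <= e / 4 by rewrite ge_min lexx.
have mix_prob : isProb (mix s mu unif).
  by apply: isProb_mix => //; [rewrite (ltW s0) | exact: isProb_unif].
exists (mix s mu unif).
  apply/basin_unifP; split=> // g; exists 0%N.
  rewrite cpow1 /mix ltr_pwDr ?mulr_gt0 ?unif_gt0 //.
  by rewrite mulr_ge0 ?subr_ge0 // (proj1 mu_prob).
rewrite pdist_mix gtr0_norm //.
apply: le_lt_trans (ler_wpM2l (ltW s0) (pdist_le2 mu_prob (isProb_unif R G))) _.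
lra.
Qed.

End Basin.

Theorem mainTheorem19 (R : realType) (G : finGroupType) (HG : abelian [set: G]) :
  exists nu : G -> R, isProb nu /\ open_in_P (basin nu) /\ dense_in_P (basin nu).
Proof.
exists unif; split; first exact: isProb_unif.
by split; [exact: open_basin_unif | exact: dense_basin_unif].
Qed.
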